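(* For each integer $k\ge4$, the function $\Phi_k$ has a unique zero in the interval $(\pi/k,\pi/(k-1))$.
   Context: For $\eta\in(0,\pi/3)$ let $|a|=\frac{1}{2\cos\eta}$ and, for an integer $k\ge1$, $\Phi_k(\eta)=(1-|a|^4)\sin((k-1)\eta)-|a|^3\sin((k-2)\eta)+|a|^k\sin\eta$. *)

From Stdlib Require Import Reals.
Open Scope R_scope.

Definition absa (eta : R) : R := 1 / (2 * cos eta).

Definition Phi (k : nat) (eta : R) : R :=
  (1 - absa eta ^ 4) * sin ((INR k - 1) * eta)
  - absa eta ^ 3 * sin ((INR k - 2) * eta)
  + absa eta ^ k * sin eta.

From Stdlib Require Import Reals Ranalysis5 Lra Lia.
From Coquelicot Require Import Coquelicot.
Open Scope R_scope.

(** For k >= 5, Phi_k is positive at pi/k, negative at pi/(k-1), and strictly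
    decreasing in between: there (k-1) eta lies within pi/5 of pi and |a|^2 <= 1/2,
    so the term (1 - |a|^4) (k-1) cos((k-1) eta) of Phi_k' outweighs all the others.
    For k = 4 that estimate fails, but |a|^2 Phi_4 = sin eta (1 - |a|^2) (1 - 2|a|^4),
    and 1 - 2|a|^4 decreases from 1/2 to -1 on (pi/4, pi/3). *)

Definition has_unique_root_in (f : R -> R) (a b : R) : Prop :=
  exists x, (a < x < b /\ f x = 0) /\ (forall y, a < y < b -> f y = 0 -> y = x).

Lemma has_unique_root_in_of_derive_neg (f f' : R -> R) (a b : R) :
  a < b ->
  (forall x, a <= x <= b -> is_derive f x (f' x)) ->
  (forall x, a < x < b -> f' x < 0) ->
  0 < f a -> f b < 0 -> has_unique_root_in f a b.
Proof.
intros hab hder hneg hfa hfb.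
assert (hdecr : forall x y, a < x -> x < y -> y < b -> f y < f x).
{ intros x y hx hxy hy.
  enough (- f x < - f y) by lra.
  apply (incr_function (fun t => - f t) a b (fun t => - f' t)); simpl; auto.
  - intros t ha hb. apply (is_derive_opp f). apply hder. lra.
  - intros t ha hb. apply Ropp_0_gt_lt_contravar, hneg. lra. }
destruct (IVT_interv (fun t => - f t) a b) as [z [hz hfz]]; [|lra|lra|lra|].
- intros t ht. apply continuity_pt_opp, continuity_pt_filterlim.
  apply (ex_derive_continuous (V := R_NormedModule)). eexists. exact (hder t ht).
- assert (hz0 : f z = 0) by lra.
  assert (a <> z) by (intros ->; lra).
  assert (z <> b) by (intros ->; lra).
  exists z. split; [split; [lra | exact hz0] |].
  intros y hy hy0.
  destruct (Rtotal_order y z) as [h | [h | h]]; [| exact h |].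
  + specialize (hdecr y z). lra.
  + specialize (hdecr z y). lra.
Qed.

Lemma has_unique_root_in_same_zeros (f g : R -> R) (a b : R) :
  (forall x, a < x < b -> (f x = 0 <-> g x = 0)) ->
  has_unique_root_in g a b -> has_unique_root_in f a b.
Proof.
intros hfg [z [[hz hgz] huniq]].
exists z. split; [split; [exact hz | apply hfg; auto] |].
intros y hy hfy. apply huniq; [exact hy | apply hfg; auto].
Qed.

Lemma pow_le_pow_of_le_1 (x : R) (m n : nat) :
  0 <= x <= 1 -> (m <= n)%nat -> x ^ n <= x ^ m.
Proof.
intros hx hmn. replace n with (m + (n - m))%nat by lia. rewrite pow_add.
assert (0 <= x ^ m) by (apply pow_le; lra).
assert (x ^ (n - m) <= 1) by (rewrite <- (pow1 (n - m)); apply pow_incr; lra).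
nra.
Qed.

Lemma absa_mul_cos (x : R) : cos x <> 0 -> absa x * (2 * cos x) = 1.
Proof. intros hc. unfold absa. field. exact hc. Qed.

Lemma absa_pos (x : R) : 0 < cos x -> 0 < absa x.
Proof. intros hc. unfold absa. apply Rdiv_lt_0_compat; lra. Qed.

Lemma cos_sq_ge_half (x : R) : 0 <= x <= PI / 4 -> 1 / 2 <= cos x ^ 2.
Proof.
intros hx. pose proof PI2_3_2.
assert (hc2 : 0 <= cos (2 * x)) by (apply cos_ge_0; lra).
rewrite cos_2a_cos in hc2. simpl. lra.
Qed.

Lemma absa_sq_le_half (x : R) : 0 <= x <= PI / 4 -> absa x ^ 2 <= 1 / 2.
Proof.
intros hx. pose proof (cos_sq_ge_half x hx) as hc2.
assert (hc : cos x <> 0) by (intros h; rewrite h in hc2; lra).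
pose proof (absa_mul_cos x hc) as hAc.
assert (hA2c2 : absa x ^ 2 * (4 * cos x ^ 2) = 1).
{ replace (absa x ^ 2 * (4 * cos x ^ 2)) with ((absa x * (2 * cos x)) ^ 2) by ring.
  rewrite hAc. ring. }
assert (0 <= absa x ^ 2) by apply pow2_ge_0.
nra.
Qed.

Lemma cos_PI_minus_le (t : R) : 0 <= t <= 4 / 5 -> cos (PI - t) <= - 17 / 25.
Proof.
intros ht. pose proof PI2_3_2.
rewrite Rtrigo_facts.cos_pi_minus.
destruct (cos_bound t 0) as [hlb _]; [lra | lra |].
unfold cos_approx, cos_term in hlb. simpl in hlb. nra.
Qed.

Lemma absa_lt_1 (x : R) : 0 <= x < PI / 3 -> absa x < 1.
Proof.
intros hx. pose proof PI2_3_2.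
assert (hc : cos (PI / 3) < cos x) by (apply cos_decreasing_1; lra).
rewrite cos_PI3 in hc.
unfold absa. apply (Rmult_lt_reg_r (2 * cos x)); [lra |].
field_simplify; lra.
Qed.

Definition Phi' (k : nat) (x : R) : R :=
  let A := absa x in
  let dA := 2 * sin x * A ^ 2 in
  - 4 * A ^ 3 * dA * sin ((INR k - 1) * x)
  + (1 - A ^ 4) * (INR k - 1) * cos ((INR k - 1) * x)
  - 3 * A ^ 2 * dA * sin ((INR k - 2) * x)
  - A ^ 3 * (INR k - 2) * cos ((INR k - 2) * x)
  + INR k * A ^ pred k * dA * sin x
  + A ^ k * cos x.

Lemma is_derive_Phi (k : nat) (x : R) : cos x <> 0 -> is_derive (Phi k) x (Phi' k x).
Proof.
intros hc. unfold Phi, Phi', absa. auto_derive.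
- repeat split; intros; lra.
- (* [field] cannot normalise powers with a symbolic exponent. *)
  unfold Rdiv.
  set (Apred := (1 * / (2 * cos x)) ^ pred k).
  set (Ak := (1 * / (2 * cos x)) ^ k).
  field. exact hc.
Qed.

Lemma PI_div_le_PI_div (u v : R) : 0 < u <= v -> PI / v <= PI / u.
Proof.
intros h. pose proof PI_RGT_0. unfold Rdiv.
apply Rmult_le_compat_l; [lra |]. apply Rinv_le_contravar; lra.
Qed.

Lemma Phi_PI_div_pos (k : nat) : (4 <= k)%nat -> 0 < Phi k (PI / INR k).
Proof.
intros hk. pose proof (le_INR 4 k hk) as hK. simpl in hK.
set (K := INR k) in *. set (x := PI / K).
pose proof PI_RGT_0.
assert (hx : 0 < x <= PI / 4).
{ split; [apply Rdiv_lt_0_compat; lra | apply PI_div_le_PI_div; lra]. }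
assert (hc : 0 < cos x) by (apply cos_gt_0; lra).
assert (hs : 0 < sin x) by (apply sin_gt_0; lra).
pose proof (absa_mul_cos x ltac:(lra)) as hAc.
pose proof (absa_sq_le_half x ltac:(lra)) as hA2.
pose proof (absa_pos x hc) as hA.
unfold Phi. fold K.
replace ((K - 1) * x) with (PI - x) by (unfold x; field; lra).
replace ((K - 2) * x) with (PI - 2 * x) by (unfold x; field; lra).
rewrite !sin_PI_x, sin_2a.
set (A := absa x) in *.
replace (A ^ 3 * (2 * sin x * cos x)) with (A ^ 2 * sin x * (A * (2 * cos x))) by ring.
rewrite hAc.
assert (0 <= A ^ k) by (apply pow_le; lra).
assert (A ^ 4 <= 1 / 4) by (replace (A ^ 4) with (A ^ 2 * A ^ 2) by ring; nra).
nra.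
Qed.

Lemma Phi_PI_div_pred_neg (k : nat) : (5 <= k)%nat -> Phi k (PI / (INR k - 1)) < 0.
Proof.
intros hk. pose proof (le_INR 5 k hk) as hK. simpl in hK.
set (K := INR k) in *. set (x := PI / (K - 1)).
pose proof PI_RGT_0.
assert (hx : 0 < x <= PI / 4).
{ split; [apply Rdiv_lt_0_compat; lra | apply PI_div_le_PI_div; lra]. }
assert (hc : 0 < cos x) by (apply cos_gt_0; lra).
assert (hs : 0 < sin x) by (apply sin_gt_0; lra).
pose proof (absa_pos x hc) as hA.
pose proof (absa_lt_1 x ltac:(lra)) as hA1.
unfold Phi. fold K.
replace ((K - 1) * x) with PI by (unfold x; field; lra).
replace ((K - 2) * x) with (PI - x) by (unfold x; field; lra).
rewrite sin_PI, sin_PI_x.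
set (A := absa x) in *.
assert (hAk : A ^ k <= A ^ 4) by (apply pow_le_pow_of_le_1; [lra | lia]).
assert (hA3 : 0 < A ^ 3) by (apply pow_lt; lra).
assert (hA43 : A ^ 4 < A ^ 3) by (replace (A ^ 4) with (A ^ 3 * A) by ring; nra).
nra.
Qed.

Lemma between_PI_divs_bounds (K x : R) :
  5 <= K -> PI / K < x < PI / (K - 1) ->
  0 < x <= PI / 4 /\ PI - 4 / 5 <= (K - 1) * x < PI.
Proof.
intros hK hx. pose proof PI_RGT_0. pose proof PI_4.
assert (hPI : PI = K * (PI / K)) by (field; lra).
assert (hK1x : (K - 1) * x < PI).
{ replace PI with ((K - 1) * (PI / (K - 1))) at 1 by (field; lra). nra. }
assert (PI / (K - 1) <= PI / 4) by (apply PI_div_le_PI_div; lra).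
assert (PI / K <= PI / 5) by (apply PI_div_le_PI_div; lra).
assert (0 < PI / K) by (apply Rdiv_lt_0_compat; lra).
assert (0 < (K - 1) * (x - PI / K)) by (apply Rmult_lt_0_compat; lra).
lra.
Qed.

Lemma absa_pow_small (x : R) (k : nat) : 0 <= x <= PI / 4 -> (5 <= k)%nat ->
  0 < absa x /\ absa x ^ 3 <= 3536 / 10000 /\ absa x ^ 4 <= 1 / 4 /\
  absa x ^ pred k * absa x ^ 2 <= 1 / 8 /\ absa x ^ k <= 1768 / 10000.
Proof.
intros hx hk. pose proof PI2_3_2.
assert (hc : 0 < cos x) by (apply cos_gt_0; lra).
pose proof (absa_pos x hc) as hA.
pose proof (absa_sq_le_half x hx) as hA2.
set (A := absa x) in *.
assert (hA1 : A <= 7072 / 10000) by nra.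
assert (hA4 : A ^ 4 <= 1 / 4) by (replace (A ^ 4) with (A ^ 2 * A ^ 2) by ring; nra).
assert (hApred : A ^ pred k <= A ^ 4) by (apply pow_le_pow_of_le_1; [lra | lia]).
assert (hAk : A ^ k <= A ^ 5) by (apply pow_le_pow_of_le_1; [lra | lia]).
assert (0 <= A ^ 2) by (apply pow_le; lra).
repeat split.
- exact hA.
- replace (A ^ 3) with (A ^ 2 * A) by ring. nra.
- exact hA4.
- nra.
- replace (A ^ 5) with (A ^ 4 * A) in hAk by ring. nra.
Qed.

Lemma Phi'_neg (k : nat) (x : R) :
  (5 <= k)%nat -> PI / INR k < x < PI / (INR k - 1) -> Phi' k x < 0.
Proof.
intros hk hx. pose proof (le_INR 5 k hk) as hK. simpl in hK.
set (K := INR k) in *.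
destruct (between_PI_divs_bounds K x ltac:(lra) hx) as [hx4 hK1x].
assert (hc : 0 < cos x) by (apply cos_gt_0; lra).
assert (hs : 0 < sin x) by (apply sin_gt_0; lra).
assert (hs2 : sin x ^ 2 <= 1 / 2).
{ pose proof (cos_sq_ge_half x ltac:(lra)). pose proof (sin2_cos2 x).
  unfold Rsqr in *. simpl in *. lra. }
assert (hS1 : 0 <= sin ((K - 1) * x)) by (apply sin_ge_0; nra).
assert (hS2 : 0 <= sin ((K - 2) * x)) by (apply sin_ge_0; nra).
assert (hC1 : cos ((K - 1) * x) <= - 17 / 25).
{ replace ((K - 1) * x) with (PI - (PI - (K - 1) * x)) by ring.
  apply cos_PI_minus_le. lra. }
assert (hC2 : - 1 <= cos ((K - 2) * x) <= 1) by apply COS_bound.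
destruct (absa_pow_small x k ltac:(lra) hk) as (hA & hA3 & hA4 & hApred & hAk).
unfold Phi'. fold K. set (A := absa x) in *. set (s := sin x) in *.
assert (0 <= A ^ 2) by (apply pow_le; lra).
assert (0 <= A ^ 3) by (apply pow_le; lra).
assert (0 <= A ^ pred k) by (apply pow_le; lra).
assert (0 <= A ^ k) by (apply pow_le; lra).
assert (hdA : 0 <= 2 * s * A ^ 2) by (apply Rmult_le_pos; lra).
assert (hT1 : 0 <= 4 * A ^ 3 * (2 * s * A ^ 2) * sin ((K - 1) * x))
  by (apply Rmult_le_pos; [apply Rmult_le_pos |]; lra).
assert (hT3 : 0 <= 3 * A ^ 2 * (2 * s * A ^ 2) * sin ((K - 2) * x))
  by (apply Rmult_le_pos; [apply Rmult_le_pos |]; lra).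
assert (hT2 : (1 - A ^ 4) * (K - 1) * cos ((K - 1) * x) <= - 51 / 100 * (K - 1)).
{ assert (3 / 4 * (K - 1) <= (1 - A ^ 4) * (K - 1)) by nra.
  set (u := (1 - A ^ 4) * (K - 1)) in *. nra. }
assert (hT4 : - A ^ 3 * (K - 2) * cos ((K - 2) * x) <= 3536 / 10000 * (K - 2)).
{ assert (0 <= A ^ 3 * (K - 2) <= 3536 / 10000 * (K - 2)) by (split; nra).
  set (v := A ^ 3 * (K - 2)) in *.
  replace (- A ^ 3 * (K - 2) * cos ((K - 2) * x)) with (- v * cos ((K - 2) * x)) by (unfold v; ring).
  nra. }
assert (hT5 : K * A ^ pred k * (2 * s * A ^ 2) * s <= K / 8).
{ replace (K * A ^ pred k * (2 * s * A ^ 2) * s) with (2 * K * (A ^ pred k * A ^ 2 * s ^ 2)) by ring.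
  assert (A ^ pred k * A ^ 2 * s ^ 2 <= 1 / 16) by (assert (0 <= s ^ 2) by apply pow2_ge_0; nra).
  nra. }
assert (hT6 : A ^ k * cos x <= 1768 / 10000) by (pose proof (COS_bound x); nra).
lra.
Qed.

Lemma Phi_4_factor (x : R) : cos x <> 0 ->
  Phi 4 x * absa x ^ 2 = sin x * (1 - absa x ^ 2) * (1 - 2 * absa x ^ 4).
Proof.
intros hc. unfold Phi.
replace (INR 4 - 1) with 3 by (simpl; ring).
replace (INR 4 - 2) with 2 by (simpl; ring).
replace (3 * x) with (2 * x + x) by ring.
rewrite sin_plus, sin_2a, cos_2a_cos.
pose proof (absa_mul_cos x hc) as hAc.
replace (cos x) with (/ (2 * absa x)).
- field. intros hA. rewrite hA in hAc. lra.
- unfold absa. field. exact hc.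
Qed.

Lemma Phi_4_eq_0_iff (x : R) : PI / 4 < x < PI / 3 ->
  (Phi 4 x = 0 <-> 1 - 2 * absa x ^ 4 = 0).
Proof.
intros hx. pose proof PI2_3_2.
assert (hc : 0 < cos x) by (apply cos_gt_0; lra).
assert (hs : 0 < sin x) by (apply sin_gt_0; lra).
pose proof (absa_pos x hc) as hA.
pose proof (absa_lt_1 x ltac:(lra)) as hA1.
pose proof (Phi_4_factor x ltac:(lra)) as hfactor.
set (A := absa x) in *.
assert (hA2 : 0 < A ^ 2 < 1) by (simpl; split; nra).
assert (hnz : sin x * (1 - A ^ 2) <> 0) by (apply Rmult_integral_contrapositive; split; lra).
split; intros h.
- rewrite h, Rmult_0_l in hfactor.
  destruct (Rmult_integral _ _ (eq_sym hfactor)); [contradiction | assumption].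
- rewrite h, Rmult_0_r in hfactor.
  destruct (Rmult_integral _ _ hfactor); [assumption | lra].
Qed.

Lemma Phi_4_unique_root : has_unique_root_in (Phi 4) (PI / 4) (PI / 3).
Proof.
pose proof PI2_3_2.
apply (has_unique_root_in_same_zeros _ (fun x => 1 - 2 * absa x ^ 4));
  [exact Phi_4_eq_0_iff |].
apply (has_unique_root_in_of_derive_neg _ (fun x => - 16 * sin x * absa x ^ 5)).
- lra.
- intros x hx. assert (hc : 0 < cos x) by (apply cos_gt_0; lra).
  unfold absa. auto_derive; [lra |]. field. lra.
- intros x hx. assert (hc : 0 < cos x) by (apply cos_gt_0; lra).
  assert (hs : 0 < sin x) by (apply sin_gt_0; lra).
  pose proof (absa_pos x hc) as hA.
  assert (0 < absa x ^ 5) by (apply pow_lt; lra). nra.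
- assert (hc2 : cos (PI / 4) ^ 2 = 1 / 2).
  { rewrite cos_PI4. unfold Rdiv. rewrite Rpow_mult_distr, pow_inv, pow2_sqrt by lra. lra. }
  unfold absa. replace ((1 / (2 * cos (PI / 4))) ^ 4) with (1 / (16 * (cos (PI / 4) ^ 2) ^ 2)).
  + rewrite hc2. lra.
  + field. intros h. rewrite h in hc2. simpl in hc2. lra.
- unfold absa. rewrite cos_PI3. lra.
Qed.

Lemma Phi_unique_root_ge_5 (k : nat) : (5 <= k)%nat ->
  has_unique_root_in (Phi k) (PI / INR k) (PI / (INR k - 1)).
Proof.
intros hk. pose proof (le_INR 5 k hk) as hK. simpl in hK.
pose proof PI2_3_2.
assert (hlt : PI / INR k < PI / (INR k - 1)).
{ unfold Rdiv. apply Rmult_lt_compat_l; [lra |]. apply Rinv_lt_contravar; nra. }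
assert (hle : PI / (INR k - 1) <= PI / 4) by (apply PI_div_le_PI_div; lra).
assert (hpos : 0 < PI / INR k) by (apply Rdiv_lt_0_compat; lra).
apply (has_unique_root_in_of_derive_neg _ (Phi' k)).
- exact hlt.
- intros x hx. apply is_derive_Phi. assert (0 < cos x) by (apply cos_gt_0; lra). lra.
- intros x hx. apply Phi'_neg; assumption.
- apply Phi_PI_div_pos. lia.
- apply Phi_PI_div_pred_neg. exact hk.
Qed.

Theorem lemma4p2 (k : nat) (hk : (4 <= k)%nat) :
  exists eta : R,
    (PI / INR k < eta < PI / (INR k - 1) /\ Phi k eta = 0) /\
    (forall eta' : R, PI / INR k < eta' < PI / (INR k - 1) -> Phi k eta' = 0 -> eta' = eta).
Proof.
change (has_unique_root_in (Phi k) (PI / INR k) (PI / (INR k - 1))).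
destruct (Nat.eq_dec k 4) as [-> | hk4].
- replace (INR 4) with 4 by (simpl; ring).
  replace (4 - 1) with 3 by ring.
  exact Phi_4_unique_root.
- apply Phi_unique_root_ge_5. lia.
Qed.
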